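(* In the Riemann problem setting of the context, assume the initial data generate a left rarefaction and a right rarefaction, i.e. $p_*\le p_L$ and $p_*\le p_R$. Then for all $K,M\in\{L,R\}$: $$|u_*-u_K|\le[\![u]\!],\qquad 0\le p_K-p_*\le\rho_Ka_K[\![u]\!],\qquad|\rho_{*K}-\rho_M|\le\rho_Ka_K^{-1}[\![u]\!]+|[\![\rho]\!]|.$$
   Context: Let $\gamma\in(1,2]$. Consider the one-dimensional Riemann problem for the complete Euler equations with left and right primitive states $V_K=(\rho_K,u_K,p_K)$, $\rho_K,p_K>0$, $K=L,R$ (transverse velocity components play no role), sound speeds $a_K=\sqrt{\gamma p_K/\rho_K}$, and jumps $[\![\rho]\!]=\rho_R-\rho_L$, $[\![u]\!]=u_R-u_L$, $[\![p]\!]=p_R-p_L$. For $K=L,R$ define $f_K(p)=(p-p_K)\big(\frac{A_K}{p+B_K}\big)^{1/2}$ if $p>p_K$ and $f_K(p)=\frac{2a_K}{\gamma-1}\big[(p/p_K)^{\frac{\gamma-1}{2\gamma}}-1\big]$ if $p\le p_K$, with $A_K=\frac2{(\gamma+1)\rho_K}$, $B_K=\frac{\gamma-1}{\gamma+1}p_K$. The star pressure $p_*$ solves $f_L(p_* )+f_R(p_* )+u_R-u_L=0$ and the star velocity is $u_*=u_L-f_L(p_* )=u_R+f_R(p_* )$. The $K$-wave is a rarefaction if $p_*\le p_K$ and a shock if $p_*>p_K$. The density on the $K$-side of the contact discontinuity is $\rho_{*K}=\rho_K(p_*/p_K)^{1/\gamma}$ if the $K$-wave is a rarefaction, and $\rho_{*K}=\rho_K\frac{p_*/p_K+\frac{\gamma-1}{\gamma+1}}{\frac{\gamma-1}{\gamma+1}p_*/p_K+1}$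 if it is a shock. *)

From Stdlib Require Import Reals.
Open Scope R_scope.

(* Primitive state (rho, u, p); transverse velocities play no role. *)
Record prim := mkPrim { rho : R; vel : R; pres : R }.

Inductive side := Lside | Rside.

Definition stateOf (VL VR : prim) (K : side) : prim :=
  match K with Lside => VL | Rside => VR end.

Definition sound (gamma : R) (V : prim) : R := sqrt (gamma * pres V / rho V).

Definition A_coef (gamma : R) (V : prim) : R := 2 / ((gamma + 1) * rho V).
Definition B_coef (gamma : R) (V : prim) : R := (gamma - 1) / (gamma + 1) * pres V.

Definition fK (gamma : R) (V : prim) (p : R) : R :=
  if Rlt_dec (pres V) p then
    (p - pres V) * sqrt (A_coef gamma V / (p + B_coef gamma V))
  else
    2 * sound gamma V / (gamma - 1) *
      (Rpower (p / pres V) ((gamma - 1) / (2 * gamma)) - 1).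

Definition rho_star (gamma : R) (V : prim) (pstar : R) : R :=
  if Rle_dec pstar (pres V) then
    rho V * Rpower (pstar / pres V) (1 / gamma)
  else
    rho V * (pstar / pres V + (gamma - 1) / (gamma + 1)) /
      ((gamma - 1) / (gamma + 1) * (pstar / pres V) + 1).

(* Both waves are isentropic rarefactions, so with s = (p_* / p_K)^((gamma-1)/(2 gamma))
   the sound-speed ratio a_{*K}/a_K in (0, 1] we have
   -f_K(p_* ) = 2 a_K (1 - s)/(gamma - 1),  p_* / p_K = s^(2 gamma/(gamma-1)),
   rho_{*K}/rho_K = s^(2/(gamma-1)).
   Both exponents are at least 1, so Bernoulli's inequality s^r >= 1 + r (s - 1)
   turns the pressure and density drops across the K-wave into multiples of -f_K(p_* ),
   while the star-state equation gives [[u]] = -f_L(p_* ) - f_R(p_* ), a sum of two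
   nonnegative terms. *)
From Stdlib Require Import Reals Lra.
Open Scope R_scope.

Lemma Rpower_1_l (r : R) : Rpower 1 r = 1.
Proof. unfold Rpower; rewrite ln_1, Rmult_0_r; apply exp_0. Qed.

Lemma Rpower_le_1 (x r : R) : 0 < x <= 1 -> 0 <= r -> Rpower x r <= 1.
Proof.
  intros Hx Hr; rewrite <- (Rpower_1_l r).
  now apply Rle_Rpower_l.
Qed.

Lemma Rpower_pos (x r : R) : 0 < Rpower x r.
Proof. apply exp_pos. Qed.

Lemma Rpower_bernoulli (y r : R) : 0 < y <= 1 -> 1 <= r -> 1 + r * (y - 1) <= Rpower y r.
Proof.
  intros [Hy0 [Hy1 | ->]] Hr; [| rewrite Rpower_1_l; lra].
  (* mean value theorem for t |-> t^r - r t on [y, 1], whose derivative is <= 0 there *)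
  destruct (MVT_cor2 (fun t => Rpower t r - r * t)
              (fun t => r * Rpower t (r - 1) - r * 1) y 1 Hy1)
    as [c [Hmvt Hc]].
  - intros c Hc.
    apply derivable_pt_lim_minus.
    + apply derivable_pt_lim_power; lra.
    + apply derivable_pt_lim_scal, derivable_pt_lim_id.
  - rewrite Rpower_1_l in Hmvt.
    assert (Hcr : Rpower c (r - 1) <= 1) by (apply Rpower_le_1; lra).
    assert (Hder : r * Rpower c (r - 1) - r * 1 <= 0) by nra.
    nra.
Qed.

Definition sound_ratio (gamma : R) (V : prim) (p : R) : R :=
  Rpower (p / pres V) ((gamma - 1) / (2 * gamma)).

Section Rarefaction.

Variables (gamma : R) (V : prim).
Hypotheses (Hgamma : 1 < gamma) (Hrho : 0 < rho V) (Hpres : 0 < pres V).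

Lemma sound_pos : 0 < sound gamma V.
Proof. apply sqrt_lt_R0, Rdiv_lt_0_compat; nra. Qed.

Lemma sound_sqr : sound gamma V * sound gamma V = gamma * pres V / rho V.
Proof. apply sqrt_sqrt, Rlt_le, Rdiv_lt_0_compat; nra. Qed.

Variable p : R.
Hypotheses (Hp : 0 < p) (Hrare : p <= pres V).

Lemma pressure_ratio_bounds : 0 < p / pres V <= 1.
Proof.
  split; [now apply Rdiv_lt_0_compat|].
  apply Rmult_le_reg_r with (pres V); [exact Hpres|].
  field_simplify; lra.
Qed.

Lemma sound_ratio_bounds : 0 < sound_ratio gamma V p <= 1.
Proof.
  split; [apply Rpower_pos|].
  apply Rpower_le_1; [exact pressure_ratio_bounds|].
  apply Rlt_le, Rdiv_lt_0_compat; lra.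
Qed.

Lemma pressure_ratio_sound_ratio :
  p / pres V = Rpower (sound_ratio gamma V p) (2 * gamma / (gamma - 1)).
Proof.
  unfold sound_ratio; rewrite Rpower_mult.
  replace ((gamma - 1) / (2 * gamma) * (2 * gamma / (gamma - 1))) with 1
    by (field; lra).
  symmetry; apply Rpower_1, pressure_ratio_bounds.
Qed.

Lemma density_ratio_sound_ratio :
  Rpower (p / pres V) (1 / gamma) = Rpower (sound_ratio gamma V p) (2 / (gamma - 1)).
Proof.
  unfold sound_ratio; rewrite Rpower_mult.
  f_equal; field; lra.
Qed.

Lemma fK_rarefaction :
  fK gamma V p = 2 * sound gamma V / (gamma - 1) * (sound_ratio gamma V p - 1).
Proof. unfold fK; destruct (Rlt_dec (pres V) p); [lra | reflexivity]. Qed.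

Lemma rho_star_rarefaction :
  rho_star gamma V p = rho V * Rpower (p / pres V) (1 / gamma).
Proof. unfold rho_star; destruct (Rle_dec p (pres V)); [reflexivity | lra]. Qed.

Lemma rarefaction_fK_nonpos : fK gamma V p <= 0.
Proof.
  rewrite fK_rarefaction.
  pose proof sound_pos; pose proof sound_ratio_bounds.
  assert (0 < 2 * sound gamma V / (gamma - 1)) by (apply Rdiv_lt_0_compat; lra).
  nra.
Qed.

Lemma rarefaction_pressure_drop :
  pres V - p <= rho V * sound gamma V * - fK gamma V p.
Proof.
  pose proof sound_ratio_bounds as Hs.
  set (s := sound_ratio gamma V p) in *.
  set (r := 2 * gamma / (gamma - 1)).
  assert (Hbern : 1 + r * (s - 1) <= p / pres V).
  { rewrite pressure_ratio_sound_ratio.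
    apply Rpower_bernoulli; [exact Hs|].
    unfold r; apply Rmult_le_reg_r with (gamma - 1); [lra|].
    field_simplify; lra. }
  assert (Hdrop : rho V * sound gamma V * - fK gamma V p = pres V * (r * (1 - s))).
  { rewrite fK_rarefaction; fold s.
    replace (rho V * sound gamma V * - (2 * sound gamma V / (gamma - 1) * (s - 1)))
      with (rho V * (sound gamma V * sound gamma V) * (2 / (gamma - 1) * (1 - s)))
      by (field; lra).
    rewrite sound_sqr; unfold r; field; lra. }
  rewrite Hdrop.
  replace (pres V - p) with (pres V * (1 - p / pres V)) by (field; lra).
  apply Rmult_le_compat_l; lra.
Qed.

Lemma rarefaction_density_drop : gamma <= 3 ->
  0 <= rho V - rho_star gamma V p <= rho V / sound gamma V * - fK gamma V p.
Proof.
  intros Hgamma3.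
  pose proof sound_pos; pose proof sound_ratio_bounds as Hs.
  set (s := sound_ratio gamma V p) in *.
  set (n := 2 / (gamma - 1)).
  assert (Hbern : 1 + n * (s - 1) <= Rpower s n).
  { apply Rpower_bernoulli; [exact Hs|].
    unfold n; apply Rmult_le_reg_r with (gamma - 1); [lra|].
    field_simplify; lra. }
  assert (Hle1 : Rpower (p / pres V) (1 / gamma) <= 1).
  { apply Rpower_le_1; [exact pressure_ratio_bounds|].
    apply Rlt_le, Rdiv_lt_0_compat; lra. }
  rewrite rho_star_rarefaction, fK_rarefaction; fold s.
  replace (rho V / sound gamma V * - (2 * sound gamma V / (gamma - 1) * (s - 1)))
    with (rho V * (n * (1 - s))) by (unfold n; field; lra).
  rewrite density_ratio_sound_ratio in Hle1 |- *; fold s n in Hle1 |- *.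
  split; nra.
Qed.

End Rarefaction.

Section StarState.

Variables (gamma : R) (VL VR : prim) (pstar : R).
Hypotheses (Hstar : fK gamma VL pstar + fK gamma VR pstar + (vel VR - vel VL) = 0)
  (HfL : fK gamma VL pstar <= 0) (HfR : fK gamma VR pstar <= 0).

Lemma star_velocity_gap (K : side) :
  Rabs (vel VL - fK gamma VL pstar - vel (stateOf VL VR K))
    = - fK gamma (stateOf VL VR K) pstar.
Proof.
  destruct K; simpl.
  - rewrite Rabs_right; lra.
  - rewrite Rabs_left1; lra.
Qed.

Lemma wave_strength_le_velocity_jump (K : side) :
  - fK gamma (stateOf VL VR K) pstar <= vel VR - vel VL.
Proof. destruct K; simpl; lra. Qed.

End StarState.

Lemma Rabs_rho_stateOf_sub (VL VR : prim) (K M : side) :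
  Rabs (rho (stateOf VL VR K) - rho (stateOf VL VR M)) <= Rabs (rho VR - rho VL).
Proof.
  destruct K, M; simpl; rewrite ?Rminus_diag, ?Rabs_R0.
  - apply Rabs_pos.
  - rewrite Rabs_minus_sym; lra.
  - lra.
  - apply Rabs_pos.
Qed.

Theorem lemma3p4 (gamma : R) (VL VR : prim) (pstar : R) :
  1 < gamma -> gamma <= 2 ->
  0 < rho VL -> 0 < pres VL -> 0 < rho VR -> 0 < pres VR ->
  0 < pstar ->
  fK gamma VL pstar + fK gamma VR pstar + (vel VR - vel VL) = 0 ->
  pstar <= pres VL -> pstar <= pres VR ->
  let ustar := vel VL - fK gamma VL pstar in
  let du := vel VR - vel VL in
  let drho := rho VR - rho VL in
  forall K M : side,
    let VK := stateOf VL VR K in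
    let VM := stateOf VL VR M in
    Rabs (ustar - vel VK) <= du /\
    0 <= pres VK - pstar /\
    pres VK - pstar <= rho VK * sound gamma VK * du /\
    Rabs (rho_star gamma VK pstar - rho VM)
      <= rho VK / sound gamma VK * du + Rabs drho.
Proof.
  intros Hg1 Hg2 HrL HpL HrR HpR Hps Hstar HL HR ustar du drho K M VK VM.
  pose proof (rarefaction_fK_nonpos gamma VL Hg1 HrL HpL pstar Hps HL) as HfL.
  pose proof (rarefaction_fK_nonpos gamma VR Hg1 HrR HpR pstar Hps HR) as HfR.
  assert (HVK : 0 < rho VK /\ 0 < pres VK /\ pstar <= pres VK)
    by (subst VK; destruct K; simpl; lra).
  destruct HVK as [HrK [HpK HK]].
  pose proof (wave_strength_le_velocity_jump gamma VL VR pstar Hstar HfL HfR K) as Hfdu.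
  pose proof (sound_pos gamma VK Hg1 HrK HpK).
  pose proof (rarefaction_pressure_drop gamma VK Hg1 HrK HpK pstar Hps HK) as Hpdrop.
  destruct (rarefaction_density_drop gamma VK Hg1 HrK HpK pstar Hps HK ltac:(lra))
    as [Hrho_star Hrdrop].
  assert (Hcoef_p : 0 <= rho VK * sound gamma VK) by (apply Rmult_le_pos; lra).
  assert (Hcoef_r : 0 <= rho VK / sound gamma VK)
    by (apply Rlt_le, Rdiv_lt_0_compat; lra).
  repeat split; [| lra | |].
  - unfold ustar, VK; rewrite (star_velocity_gap gamma VL VR pstar Hstar HfL HfR K).
    exact Hfdu.
  - eapply Rle_trans; [exact Hpdrop | exact (Rmult_le_compat_l _ _ _ Hcoef_p Hfdu)].
  - replace (rho_star gamma VK pstar - rho VM)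
      with ((rho_star gamma VK pstar - rho VK) + (rho VK - rho VM)) by ring.
    eapply Rle_trans; [apply Rabs_triang | apply Rplus_le_compat].
    + rewrite Rabs_minus_sym, Rabs_right by lra.
      eapply Rle_trans; [exact Hrdrop | exact (Rmult_le_compat_l _ _ _ Hcoef_r Hfdu)].
    + apply Rabs_rho_stateOf_sub.
Qed.
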